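(* Let $X$ and $Y$ be metric spaces and let $A(X)\subseteq C(X)$ and $A(Y)\subseteq C(Y)$ be adequate subspaces. If $h:\mathcal{A}X\to\mathcal{A}Y$ is a homeomorphism and $x_0\in X$, then there is a sequence $(y_n)$ in $Y$ that converges to $h(x_0)$ in $\mathcal{A}Y$.
   Context: All functions are real-valued. $A(X)\subseteq C(X)$ separates points from closed sets if for every $x\in X$ and closed $F\not\ni x$ there is $f\in A(X)$ with $f(x)=1$, $f=0$ on $F$. $A(X)$ is adequate if (a) it separates points from closed sets and contains the constants; (b) there is a continuous nondecreasing $g:\mathbb{R}\to\mathbb{R}$ with $g(t)=0$ for $t\le0$, $g(t)=1$ for $t\ge1$, and $g\circ f\in A(X)$ for all $f\in A(X)$; (c) every $f\in A(X)$ is a difference of two nonnegative elements of $A(X)$. The $A(X)$-compactification $\mathcal{A}X$ is the closure of $i(X)$ in $[-\infty,\infty]^{A(X)}$ (product of order topologies), where $i(x)(\varphi)=\varphi(x)$ is a homeomorphic embedding; $X$ is identified with $i(X)\subseteq\mathcal{A}X$. $\mathcal{A}Y$ is defined analogously from $A(Y)$. *)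

From HB Require Import structures.
From mathcomp Require Import all_boot all_order all_algebra.
From mathcomp Require Import all_classical all_reals all_analysis.
Unset Printing Implicit Defensive.
Import Order.TTheory GRing.Theory Num.Theory.
Import numFieldNormedType.Exports.
Local Open Scope classical_set_scope.
Local Open Scope ring_scope.

Section Adequate.
Context {R : realType} {X : topologicalType}.

Definition subspace_of_C (A : set (X -> R)) : Prop :=
  [/\ A `<=` [set f | continuous f],
      A (fun _ => 0),
      (forall f g, A f -> A g -> A (f \+ g)) &
      (forall (c : R) f, A f -> A (fun x => c * f x))].

Definition separates_points_closed (A : set (X -> R)) : Prop :=
  forall (x : X) (F : set X), closed F -> ~ F x ->
    exists2 f, A f & f x = 1 /\ (forall z, F z -> f z = 0).

Definition adequate (A : set (X -> R)) : Prop :=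
  [/\ separates_points_closed A /\ (forall c : R, A (fun _ => c)),
      (exists g : R -> R,
        [/\ continuous g,
            {homo g : s t / s <= t},
            (forall t, t <= 0 -> g t = 0),
            (forall t, 1 <= t -> g t = 1) &
            (forall f, A f -> A (g \o f))]) &
      (forall f, A f -> exists f1 f2,
         [/\ A f1, A f2, (forall x, 0 <= f1 x), (forall x, 0 <= f2 x) &
             f = f1 \- f2])].

Definition ambient (A : set (X -> R)) := {ptws set_type A -> \bar R}.

Definition evalA (A : set (X -> R)) (x : X) : ambient A :=
  fun phi => ((sval phi) x)%:E.

Definition Acompactification (A : set (X -> R)) : set (ambient A) :=
  closure (range (evalA A)).

End Adequate.

Definition homeomorphism_between {T T' : topologicalType}
  (S : set T) (S' : set T') (h : T -> T') : Prop :=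
  exists g : T' -> T,
    [/\ (forall x, S x -> S' (h x)) /\
        (forall y, S' y -> S (g y)),
        (forall x, S x -> g (h x) = x),
        (forall y, S' y -> h (g y) = y),
        {within S, continuous h} &
        {within S', continuous g}].

From HB Require Import structures.
From mathcomp Require Import all_boot all_order all_algebra.
From mathcomp Require Import all_classical all_reals all_analysis.
Import Order.TTheory GRing.Theory Num.Theory.
Import numFieldNormedType.Exports.
Local Open Scope classical_set_scope.
Local Open Scope ring_scope.

(** Let g be the inverse of h and p := h(x0). For bump functions f_n in A(X)
    with f_n(x0) = 1 and support in the ball of radius 1/(n+1) around x0, the
    sets Z_n = {s | s(f_n) > 0} are open neighbourhoods of g(p) = x0, so by
    continuity of g and density of Y there are y_n with g(y_n) in Z_n. Any
    cluster point s of a sequence s_n in the closure of X with s_n in Z_n is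
    x0: points x of X close to s_n have f_n(x) > 0, hence lie within 1/(n+1)
    of x0, so phi(s) = phi(x0) for every phi in A(X). Therefore every cluster
    point q of (y_n) satisfies g(q) = x0, i.e. q = p, and compactness of
    [-oo,+oo]^A(Y) turns this into convergence. *)

Lemma compact_erealT (R : realType) : compact [set: \bar R].
Proof.
move=> F FF _.
have Fc : ((@contract R) @ F) `[-1, 1]%classic.
  apply: (@filterS _ F _ setT) => [x _ /=|]; last exact: filterT.
  by rewrite in_itv /= -ler_norml contract_le1.
have [c [c11 cc]] := @segment_compact R (-1) 1 _ _ Fc.
exists (expand c); split => //.
move=> A B FA /nbhs_ballP [e e0 eB].
have FcA : ((@contract R) @ F) ((@contract R) @` A).
  by apply: (@filterS _ F _ A) => // x Ax; exists x.
have [_ [[a Aa <-] ca]] := cc _ (@ball _ R^o c e) FcA (@nbhsx_ballx R R^o c e e0).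
exists a; split => //; apply: eB.
move: ca; rewrite /ball /= /ereal_ball expandK //.
by move: c11; rewrite /= in_itv /= inE ler_norml.
Qed.

Lemma compact_ptwsT (I : eqType) (T : topologicalType) :
  compact [set: T] -> compact [set: {ptws I -> T}].
Proof.
move=> cT; have -> : [set: {ptws I -> T}] = [set f | forall i, [set: T] (f i)].
  by rewrite predeqE.
exact: (@tychonoff _ (fun _ => T) (fun _ => setT) (fun _ => cT)).
Qed.

Lemma nbhs_ptws_proj (I : eqType) (T : topologicalType) (f : {ptws I -> T}) i
    (U : set T) :
  nbhs (f i) U -> nbhs f [set g : {ptws I -> T} | U (g i)].
Proof. exact: (@proj_continuous I (fun _ => T) i f). Qed.

Lemma cvg_unique_cluster (T : topologicalType) (F : set_system T) (p : T) :
  hausdorff_space T -> compact [set: T] -> ProperFilter F ->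
  (forall q, cluster F q -> q = p) -> F --> p.
Proof.
move=> hT cT PF clFp.
apply: (compact_cluster_set1 hT cT filterT PF filterT).
rewrite eqEsubset; split => [q /clFp -> //|_ ->].
by have [q [_ /[dup] /clFp <-]] := cT F PF filterT.
Qed.

Lemma cluster_within_continuous (T U : topologicalType) (S : set T)
    (g : T -> U) (F : set_system T) {FF : Filter F} (q : T) :
  {within S, continuous g} -> F S -> S q -> cluster F q ->
  cluster (g @ F) (g q).
Proof.
move=> gc FS Sq cFq A B FA nB.
have nW : nbhs q [set x | S x -> B (g x)].
  exact: ((subspace_continuousP S g).1 gc q Sq B nB).
have [x [[Ax Sx] Wx]] := cFq _ _ (@filterI _ F _ _ _ FA FS) nW.
by exists (g x); split => //; apply: Wx.
Qed.

Lemma continuous_within_closure_range (I T U : topologicalType) (e : I -> T)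
    (g : T -> U) (p : T) (V : set U) :
  {within closure (range e), continuous g} -> closure (range e) p ->
  nbhs (g p) V -> exists y, V (g (e y)).
Proof.
move=> gc Sp nV.
have nW := (subspace_continuousP _ g).1 gc p Sp V nV.
have [_ [[y _ <-] Wy]] := Sp _ nW.
by exists y; apply: Wy; apply: subset_closure; exists y.
Qed.

Section bump_coordinates.
Context {R : realType} {X : pseudoMetricType R} {A : set (X -> R)}.

Lemma separates_bump (x0 : X) (r : R) :
  separates_points_closed A -> 0 < r ->
  exists2 f, A f & f x0 = 1 /\ forall z, ~ ball x0 r z -> f z = 0.
Proof.
move=> sepA r0.
have cl : closed (~` (ball x0 r)°) by apply: open_closedC; apply: open_interior.
have nb : ~ (~` (ball x0 r)°) x0 by apply; exact: nbhsx_ballx.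
have [f Af [f1 f0]] := sepA x0 _ cl nb.
by exists f => //; split => // z zb; apply: f0 => /interior_subset.
Qed.

Lemma bump_family (x0 : X) : separates_points_closed A ->
  exists2 f : nat -> set_type A, (forall n, sval (f n) x0 = 1) &
    forall n z, ~ ball x0 n.+1%:R^-1 z -> sval (f n) z = 0.
Proof.
move=> sepA; have /choice [f fP] n : exists f : X -> R,
    A f /\ f x0 = 1 /\ forall z, ~ ball x0 n.+1%:R^-1 z -> f z = 0.
  have r0 : 0 < n.+1%:R^-1 :> R by rewrite invr_gt0.
  by have [f Af fP] := separates_bump x0 _ sepA r0; exists f.
exists (fun n => exist _ (f n) (mem_set (fP n).1)) => n.
- exact: (fP n).2.1.
- exact: (fP n).2.2.
Qed.

Variables (x0 : X) (f : nat -> set_type A).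
Hypothesis f_supp : forall n z, ~ ball x0 n.+1%:R^-1 z -> sval (f n) z = 0.

Definition bump_nbhd n : set (ambient A) := [set s | (0 < s (f n))%E].

Lemma nbhs_bump_nbhd n s : bump_nbhd n s -> nbhs s (bump_nbhd n).
Proof.
move=> Zs; apply: (@nbhs_ptws_proj _ _ s (f n) [set e | (0 < e)%E]).
by apply: open_nbhs_nbhs; split => //; exact: open_ereal_gt_ereal.
Qed.

Lemma bump_nbhd_evalA n z : bump_nbhd n (evalA A z) -> ball x0 n.+1%:R^-1 z.
Proof.
move=> Zz; apply: contrapT => /f_supp fz0.
by move: Zz; rewrite /bump_nbhd /evalA /= fz0 ltxx.
Qed.

Hypothesis contA : A `<=` [set phi | continuous phi].

Lemma cluster_bump_nbhd (s : nat -> ambient A) (t : ambient A) :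
  (forall n, closure (range (evalA A)) (s n) /\ bump_nbhd n (s n)) ->
  cluster (s @ \oo) t -> t = evalA A x0.
Proof.
move=> sZ ct; apply: functional_extensionality_dep => phi.
apply: ereal_hausdorff => U V; rewrite nbhsE => -[W [oW Wt] WU] nV.
have /nbhs_ballP [eps eps0 epsV] : nbhs x0 (fun x => V (sval phi x)%:E).
  exact: (contA _ (set_mem (svalP phi)) x0 (fun t => V t%:E) nV).
have FA : (s @ \oo) (s @` [set n | n.+1%:R^-1 < eps]).
  apply: (@filterS nat \oo _ [set n | n.+1%:R^-1 < eps]) => [n rn|].
    by exists n.
  exact: (near_infty_natSinv_lt (PosNum eps0)).
have nW : nbhs t [set s : ambient A | W (s phi)].
  exact: nbhs_ptws_proj (open_nbhs_nbhs (conj oW Wt)).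
have [_ [[n rn <-] Wsn]] := ct _ _ FA nW.
have [sK Zsn] := sZ n.
have nWZ : nbhs (s n) ([set s : ambient A | W (s phi)] `&` bump_nbhd n).
  apply: filterI; last exact: nbhs_bump_nbhd.
  exact: nbhs_ptws_proj (open_nbhs_nbhs (conj oW Wsn)).
have [_ [[x _ <-] [Wx /bump_nbhd_evalA xn]]] := sK _ nWZ.
exists (sval phi x)%:E; split; first exact: WU.
by apply: epsV; apply: (le_ball _ xn); exact: ltW rn.
Qed.

End bump_coordinates.

Theorem proposition4p2 (R : realType) (X Y : metricType R)
  (AX : set (X -> R)) (AY : set (Y -> R))
  (sAX : subspace_of_C AX) (sAY : subspace_of_C AY)
  (adX : adequate AX) (adY : adequate AY)
  (h : ambient AX -> ambient AY)
  (hh : homeomorphism_between (Acompactification AX) (Acompactification AY) h)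
  (x0 : X) :
  exists y : nat -> Y,
    (fun n => evalA AY (y n)) @ \oo --> h (evalA AX x0).
Proof.
have [g [[hK gK] ghK hgK _ gc]] := hh.
have [[sepX _] _ _] := adX; have [contX _ _ _] := sAX.
have x0K : Acompactification AX (evalA AX x0) by apply: subset_closure; exists x0.
have [f fA f_supp] := bump_family x0 sepX.
have : forall n, exists y, bump_nbhd f n (g (evalA AY y)).
  move=> n; apply: (@continuous_within_closure_range _ _ _ (evalA AY) g _
    (bump_nbhd f n) gc (hK _ x0K)).
  by rewrite ghK //; apply: nbhs_bump_nbhd; rewrite /bump_nbhd /evalA /= fA lte01.
move=> /choice [y yZ]; exists y.
apply: cvg_unique_cluster.
- by apply: hausdorff_product => _; exact: ereal_hausdorff.
- exact: compact_ptwsT (compact_erealT R).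
move=> q cq.
have yK n : Acompactification AY (evalA AY (y n)).
  by apply: subset_closure; exists (y n).
have FR : ((fun n => evalA AY (y n)) @ \oo) (range (evalA AY)).
  by apply: (@filterE nat \oo) => n; exists (y n).
have qK : Acompactification AY q by move=> B nB; exact: (cq _ _ FR nB).
rewrite -(hgK q qK); congr h.
apply: (cluster_bump_nbhd _ _ f_supp contX (fun n => g (evalA AY (y n)))).
  by move=> n; split; [exact: gK | exact: yZ].
apply: cluster_within_continuous gc _ qK cq.
by apply: (@filterE nat \oo) => n; exact: yK.
Qed.
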